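(* Let $P\in\mathbb{R}^N$ and $a\in\mathbb{R}$. If the equation $H(x,Du+P)=a$ in $\mathbb{R}^N$ admits a bounded $\mathbb{Z}^N$-periodic upper semicontinuous viscosity subsolution and a bounded $\mathbb{Z}^N$-periodic lower semicontinuous viscosity supersolution, then $a=\overline H(P)$.
   Context: $V:\mathbb{R}^N\to\mathbb{R}^N$ is $\mathbb{Z}^N$-periodic and Lipschitz continuous; $H(x,p)=|p|+p\cdot V(x)$. $\overline H(P)=\inf\{a\in\mathbb{R}\mid H(x,Du+P)=a$ admits an upper semicontinuous, bounded, $\mathbb{Z}^N$-periodic viscosity subsolution on $\mathbb{R}^N\}$. *)

From HB Require Import structures.
From mathcomp Require Import all_boot all_order all_algebra.
From mathcomp Require Import all_classical all_reals all_analysis.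
Set Implicit Arguments. Unset Strict Implicit. Unset Printing Implicit Defensive.
Import Order.TTheory GRing.Theory Num.Theory.
Import numFieldNormedType.Exports.
Local Open Scope classical_set_scope.
Local Open Scope ring_scope.

Section Defs.
Variables (R : realType) (N : nat).
Notation vec := 'rV[R]_N.

Definition dotp (p q : vec) : R := \sum_(i < N) p 0 i * q 0 i.
Definition enorm (p : vec) : R := Num.sqrt (dotp p p).

Definition Ham (V : vec -> vec) (x p : vec) : R := enorm p + dotp p (V x).

Definition intvec (z : 'rV[int]_N) : vec := map_mx (fun t : int => t%:~R) z.

Definition Zperiodic {T : Type} (f : vec -> T) : Prop :=
  forall (x : vec) (z : 'rV[int]_N), f (x + intvec z) = f x.

Definition lipschitz_vf (V : vec -> vec) : Prop :=
  exists L : R, forall x y : vec, enorm (V x - V y) <= L * enorm (x - y).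

Definition bdd_fun (u : vec -> R) : Prop :=
  exists M : R, forall x, `|u x| <= M.

Definition usc (u : vec -> R) : Prop :=
  forall (x : vec) (c : R), u x < c -> \forall y \near x, u y < c.
Definition lsc (u : vec -> R) : Prop :=
  forall (x : vec) (c : R), c < u x -> \forall y \near x, c < u y.

Definition grad (phi : vec -> R) (x : vec) : vec :=
  \row_(i < N) ('d phi x (delta_mx 0 i : vec)).

Definition C1 (phi : vec -> R) : Prop :=
  (forall x, differentiable phi x) /\
  (forall i : 'I_N, continuous (fun x => 'd phi x (delta_mx 0 i : vec))).

Definition visc_sub (V : vec -> vec) (P : vec) (a : R) (u : vec -> R) : Prop :=
  usc u /\
  forall (phi : vec -> R) (x0 : vec), C1 phi ->
    (\forall y \near x0, u y - phi y <= u x0 - phi x0) ->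
    Ham V x0 (grad phi x0 + P) <= a.

Definition visc_super (V : vec -> vec) (P : vec) (a : R) (u : vec -> R) : Prop :=
  lsc u /\
  forall (phi : vec -> R) (x0 : vec), C1 phi ->
    (\forall y \near x0, u x0 - phi x0 <= u y - phi y) ->
    a <= Ham V x0 (grad phi x0 + P).

Definition Hbar (V : vec -> vec) (P : vec) : \bar R :=
  ereal_inf [set a%:E | a in [set a : R |
     exists u : vec -> R, visc_sub V P a u /\ bdd_fun u /\ Zperiodic u]].

End Defs.

(* Hbar(P) <= a since u is admissible in the infimum defining Hbar(P).  For
   the converse, let w be a bounded periodic subsolution of level b; we show
   a <= b by doubling variables.  Phi_c(x, y) = w(x) - v(y) - c |x - y|^2 attains
   its maximum: periodicity brings maximizing pairs into a compact box, and Phi_c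
   is upper semicontinuous.  Comparing the maxima m_c and m_2c shows that
   c |x_2c - y_2c|^2 <= m_c - m_2c, so along c = 2^k (the maxima being bounded)
   the penalty at the maximizer becomes arbitrarily small.  Testing
   w at x_c and v at y_c with quadratics gives
   a - b <= (2c (x_c - y_c) + P) . (V y_c - V x_c),
   which the Lipschitz bound on V and Young's inequality make arbitrarily small. *)

From HB Require Import structures.
From mathcomp Require Import all_boot all_order all_algebra.
From mathcomp Require Import all_classical all_reals all_analysis.
From mathcomp Require Import ring lra.
Set Implicit Arguments. Unset Strict Implicit. Unset Printing Implicit Defensive.
Import Order.TTheory GRing.Theory Num.Theory.
Import numFieldNormedType.Exports.
Local Open Scope classical_set_scope.
Local Open Scope ring_scope.

Section InnerProduct.
Variables (R : realType) (N : nat).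
Implicit Types (p q w : 'rV[R]_N) (k : R).

Lemma dotpC p q : dotp p q = dotp q p.
Proof. by apply: eq_bigr => i _; rewrite mulrC. Qed.

Lemma dotpDl p q w : dotp (p + q) w = dotp p w + dotp q w.
Proof. by rewrite /dotp -big_split; apply: eq_bigr => i _; rewrite !mxE mulrDl. Qed.

Lemma dotpBr p q w : dotp p (q - w) = dotp p q - dotp p w.
Proof. by rewrite /dotp -sumrB; apply: eq_bigr => i _; rewrite !mxE mulrBr. Qed.

Lemma dotpZl k p q : dotp (k *: p) q = k * dotp p q.
Proof. by rewrite /dotp mulr_sumr; apply: eq_bigr => i _; rewrite !mxE mulrA. Qed.

Lemma dotpNN p q : dotp (- p) (- q) = dotp p q.
Proof. by apply: eq_bigr => i _; rewrite !mxE mulrNN. Qed.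

Lemma dotp0l p : dotp 0 p = 0.
Proof. by rewrite /dotp big1 // => i _; rewrite mxE mul0r. Qed.

Lemma dotp_delta p i : dotp p (delta_mx 0 i) = p 0 i.
Proof.
rewrite /dotp (bigD1 i) //= big1 => [|j ji]; rewrite !mxE ?eqxx /=.
  by rewrite mulr1 addr0.
by rewrite (negbTE ji) mulr0.
Qed.

Lemma dotp_ge0 p : 0 <= dotp p p.
Proof. by apply: sumr_ge0 => i _; rewrite -expr2 sqr_ge0. Qed.

Lemma coord_sqr_le_dotp p i : p 0 i ^+ 2 <= dotp p p.
Proof.
rewrite /dotp (bigD1 i) //= -expr2 lerDl.
by apply: sumr_ge0 => j _; rewrite -expr2 sqr_ge0.
Qed.

Lemma dotp_le_mean p q : 2 * dotp p q <= dotp p p + dotp q q.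
Proof.
rewrite /dotp -big_split mulr_sumr; apply: ler_sum => i _.
rewrite -subr_ge0.
have -> : p 0 i * p 0 i + q 0 i * q 0 i - 2 * (p 0 i * q 0 i) = (p 0 i - q 0 i) ^+ 2 by ring.
exact: sqr_ge0.
Qed.

Lemma dotp_young k p q : 0 < k -> 2 * dotp p q <= k * dotp p p + dotp q q / k.
Proof.
move=> k0; rewrite -(ler_pM2l k0) mulrCA -[k * dotp p q]dotpZl.
have -> : k * (k * dotp p p + dotp q q / k) = dotp (k *: p) (k *: p) + dotp q q.
  by rewrite dotpZl [dotp p (k *: p)]dotpC dotpZl; field; rewrite gt_eqF.
exact: dotp_le_mean.
Qed.

Lemma dotp_le_of_enorm_le k p q :
  enorm p <= k * enorm q -> dotp p p <= k ^+ 2 * dotp q q.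
Proof.
rewrite /enorm => h.
rewrite -(sqr_sqrtr (dotp_ge0 p)) -(sqr_sqrtr (dotp_ge0 q)) -exprMn.
by rewrite ler_sqr ?nnegrE ?sqrtr_ge0 //; apply: le_trans h.
Qed.

Lemma Ham_subx (V : 'rV[R]_N -> 'rV[R]_N) x y q :
  Ham V x q - Ham V y q = dotp q (V x - V y).
Proof. by rewrite /Ham dotpBr; ring. Qed.

End InnerProduct.

Section Paraboloid.
Variables (R : realType) (N : nat).
Implicit Types (x z v : 'rV[R]_N) (k c : R).

Definition paraboloid z k c x := k + c * dotp (x - z) (x - z).

Lemma is_derive_coord (j : 'I_N) x v : is_derive x v (fun y : 'rV[R]_N => y 0 j) (v 0 j).
Proof.
have @f : {linear 'rV[R]_N -> R}.
  by exists (fun y : 'rV[R]_N => y 0 j); do 2![eexists]; do ?[constructor];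
     rewrite ?mxE// => ? *; rewrite ?mxE//; move=> ?; rewrite !mxE.
have -> : (fun y : 'rV[R]_N => y 0 j) = f by [].
have df : differentiable f x by exact/linear_differentiable/coord_continuous.
apply: DeriveDef; first exact: diff_derivable.
by rewrite deriveE // diff_lin //; exact: coord_continuous.
Qed.

Lemma sqdist_sum z :
  (fun x => dotp (x - z) (x - z)) =
  \sum_(j < N) (fun x : 'rV[R]_N => (x 0 j - z 0 j) * (x 0 j - z 0 j)).
Proof. by apply/funext => x; rewrite fct_sumE; apply: eq_bigr => j _; rewrite !mxE. Qed.

Lemma is_derive_sqdist z x v :
  is_derive x v (fun y => dotp (y - z) (y - z)) (2 * dotp (x - z) v).
Proof.
rewrite sqdist_sum.
have -> : 2 * dotp (x - z) v =
    \sum_(j < N) ((x 0 j - z 0 j) *: v 0 j + (x 0 j - z 0 j) *: v 0 j).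
  by rewrite /dotp mulr_sumr; apply: eq_bigr => j _; rewrite !mxE /GRing.scale /=; ring.
apply: is_derive_sum => j.
have hd : is_derive x v (fun y : 'rV[R]_N => y 0 j - z 0 j) (v 0 j).
  by have := is_deriveB (is_derive_coord j x v) (is_derive_cst (z 0 j) x v); rewrite subr0.
exact: (@is_deriveM _ _ _ _ x v _ _ hd hd).
Qed.

Lemma differentiable_sqdist z x : differentiable (fun y => dotp (y - z) (y - z)) x.
Proof.
rewrite sqdist_sum; apply: differentiable_sum => j.
have hd : differentiable (fun y : 'rV[R]_N => y 0 j - z 0 j) x.
  exact: differentiableB (differentiable_coord _ _ _) (differentiable_cst _ _).
exact: (@differentiableM _ _ _ _ x hd hd).
Qed.

Lemma differentiable_paraboloid z k c x : differentiable (paraboloid z k c) x.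
Proof.
apply: differentiableD; first exact: differentiable_cst.
apply: differentiableM; first exact: differentiable_cst.
exact: differentiable_sqdist.
Qed.

Lemma diff_paraboloid z k c x v :
  'd (paraboloid z k c) x v = 2 * c * dotp (x - z) v.
Proof.
rewrite -deriveE; last exact: differentiable_paraboloid.
have : is_derive x v (paraboloid z k c) (c * (2 * dotp (x - z) v)).
  have := is_deriveD (is_derive_cst k x v)
    (is_deriveM (is_derive_cst c x v) (is_derive_sqdist z x v)).
  by rewrite /GRing.scale /= mulr0 !add0r addr0 => h; exact: h.
by move=> hd; rewrite derive_val mulrCA mulrA.
Qed.

Lemma paraboloid_C1 z k c : C1 (paraboloid z k c).
Proof.
split=> [|i x]; first exact: differentiable_paraboloid.
have -> : (fun y => 'd (paraboloid z k c) y (delta_mx 0 i : 'rV[R]_N)) =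
    cst (2 * c) * ((fun y : 'rV[R]_N => y 0 i) - cst (z 0 i)).
  by apply/funext => y; rewrite diff_paraboloid dotp_delta !mxE.
apply: differentiable_continuous; apply: differentiableM; first exact: differentiable_cst.
exact: differentiableB (differentiable_coord _ _ _) (differentiable_cst _ _).
Qed.

Lemma grad_paraboloid z k c x : grad (paraboloid z k c) x = (2 * c) *: (x - z).
Proof. by apply/rowP => i; rewrite !mxE diff_paraboloid dotp_delta !mxE. Qed.

End Paraboloid.

Lemma compact_usc_attains (T : topologicalType) (R : realType) (K : set T) (f : T -> R) (s : R) :
  compact K ->
  (forall x c, f x < c -> \forall y \near x, f y < c) ->
  (forall e, 0 < e -> exists2 x, K x & s - e < f x) ->
  exists2 x, K x & s <= f x.
Proof.
move=> cK fusc appr.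
pose B e := K `&` [set x | s - e < f x].
have FB : Filter (filter_from [set e : R | 0 < e] B).
  apply: filter_from_filter; first by exists 1; rewrite /= ltr01.
  move=> i j /= i0 j0; exists (Num.min i j); first by rewrite /= lt_min i0 j0.
  move=> x [Kx /= hx]; split; split => //=; apply: le_lt_trans hx;
    by rewrite lerD2l lerN2 ge_min lexx ?orbT.
have PB : ProperFilter (filter_from [set e : R | 0 < e] B).
  apply: filter_from_proper => e /= e0.
  by have [x Kx hx] := appr e e0; exists x.
have [z [Kz clz]] : exists z, K z /\ cluster (filter_from [set e : R | 0 < e] B) z.
  by apply: cK; exists 1; [rewrite /= ltr01 | move=> x []].
exists z => //; rewrite leNgt; apply/negP => fzs.
have near_z := fusc z ((f z + s) / 2) ltac:(lra).
have e0 : 0 < (s - f z) / 2 by lra.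
have [y [[_ /= hy1] hy2]] := clz _ _ (ex_intro2 _ _ ((s - f z) / 2) e0 (@subset_refl _ _)) near_z.
lra.
Qed.

Lemma bounded_seq_small_decrement (R : realType) (m : nat -> R) (M e : R) :
  (forall k, `|m k| <= M) -> 0 < e -> exists k, m k - m k.+1 <= e.
Proof.
move=> mM e0; apply: contrapT => /forallNP big.
have drop n : n%:R * e <= m 0%N - m n.
  elim: n => [|n IH]; first by rewrite mul0r subrr.
  have := big n; move/negP; rewrite -ltNge -natr1 mulrDl mul1r; lra.
pose n := (Num.truncn (2 * M / e)).+1.
have : 2 * M < n%:R * e by rewrite -ltr_pdivrMr //; exact: truncnS_gt.
have := drop n; have := mM 0%N; have := mM n; rewrite !ler_norml; lra.
Qed.

Lemma le_of_forall_leDM (R : realFieldType) (x y C : R) :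
  0 <= C -> (forall e, 0 < e -> x <= y + C * e) -> x <= y.
Proof.
move=> C0 h; apply/ler_addgt0Pr => e e0.
have C1 : 0 < C + 1 by lra.
apply: le_trans (h (e / (C + 1)) (divr_gt0 e0 C1)) _.
rewrite lerD2l mulrA ler_pdivrMr //; nra.
Qed.

Lemma abs_le_of_sqr_le (R : realDomainType) (t X : R) : t ^+ 2 <= X -> `|t| <= X + 1.
Proof.
move=> tX; case: (lerP `|t| 1) => t1.
  by apply: le_trans t1 _; rewrite lerDr (le_trans (sqr_ge0 t)).
by rewrite -real_normK ?num_real // in tX; nra.
Qed.

Section Box.
Variables (R : realType) (N : nat).

Definition box (lo hi : R) : set 'rV[R]_N := [set w | forall i, `[lo, hi]%classic (w ord0 i)].

Lemma box_compact lo hi : compact (box lo hi).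
Proof. exact: (@rV_compact R N (fun=> `[lo, hi]%classic) (fun=> @segment_compact R lo hi)). Qed.

Lemma exists_intvec_box01 (x : 'rV[R]_N) : exists z, box 0 1 (x + intvec R z).
Proof.
exists (\row_i (- Num.floor (x 0 i))) => i; rewrite /= in_itv /= !mxE mulrNz.
have := real_floor_le (num_real (x 0 i)).
have := real_floorD1_gt (num_real (x 0 i)); rewrite intrD.
lra.
Qed.

End Box.

Section Doubling.
Variables (R : realType) (N : nat) (u v : 'rV[R]_N -> R).

Definition doubling c x y := u x - v y - c * dotp (x - y) (x - y).

Definition doubling_argmax c x y := forall x' y', doubling c x' y' <= doubling c x y.

Lemma doubling_gap c x y x' y' : doubling_argmax c x y ->
  c * dotp (x' - y') (x' - y') <= doubling c x y - doubling (2 * c) x' y'.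
Proof. by move=> /(_ x' y'); rewrite /doubling; lra. Qed.

Variables (Mu Mv : R).
Hypotheses (uMu : forall x, `|u x| <= Mu) (vMv : forall y, `|v y| <= Mv).

Lemma doubling_penalty_le c x y :
  c * dotp (x - y) (x - y) <= Mu + Mv - doubling c x y.
Proof.
by have := uMu x; have := vMv y; rewrite /doubling !ler_norml; lra.
Qed.

Lemma doubling_le c x y : 0 <= c -> doubling c x y <= Mu + Mv.
Proof.
move=> c0; have := doubling_penalty_le c x y.
have := mulr_ge0 c0 (dotp_ge0 (x - y)); lra.
Qed.

Lemma doubling00_ge c : - (Mu + Mv) <= doubling c 0 0.
Proof.
by have := uMu 0; have := vMv 0; rewrite /doubling subrr dotp0l !ler_norml; lra.
Qed.

Hypotheses (uusc : usc u) (vlsc : lsc v) (uper : Zperiodic u) (vper : Zperiodic v).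

Lemma doubling_translate c x y z :
  doubling c (x + intvec R z) (y + intvec R z) = doubling c x y.
Proof. by rewrite /doubling uper vper opprD addrACA subrr addr0. Qed.

Lemma doubling_usc c (p : 'rV[R]_N * 'rV[R]_N) C :
  doubling c p.1 p.2 < C -> \forall q \near p, doubling c q.1 q.2 < C.
Proof.
case: p => x y /= hC; set r := C - doubling c x y.
have r0 : 0 < r by rewrite subr_gt0.
have hu : \forall q \near (x, y), u q.1 < u x + r / 3.
  have /uusc ux : u x < u x + r / 3 by lra.
  exact: (@cvg_fst _ _ _ _ (@nbhs_pfilter _ y) _ ux).
have hv : \forall q \near (x, y), v y - r / 3 < v q.2.
  have /vlsc vy : v y - r / 3 < v y by lra.
  exact: (@cvg_snd _ _ _ _ (@nbhs_pfilter _ x) _ vy).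
pose g := paraboloid (0 : 'rV[R]_N) 0 c.
have hg : \forall q \near (x, y), g (x - y) - r / 3 < g (q.1 - q.2).
  have gc : {for x - y, continuous g}.
    exact/differentiable_continuous/differentiable_paraboloid.
  have := @continuous_comp _ _ _ (fun q : 'rV[R]_N * 'rV[R]_N => q.1 - q.2) g (x, y)
    (@sub_continuous _ (x, y)) gc.
  by move/cvgr_gt; apply; rewrite /=; lra.
apply: filterS (filterI hu (filterI hv hg)) => q [+ []].
by rewrite /g /paraboloid !subr0 !add0r /r /doubling; lra.
Qed.

Lemma doubling_argmax_exists c : 0 < c -> exists x y, doubling_argmax c x y.
Proof.
move=> c0; set M := Mu + Mv.
pose Phi (p : 'rV[R]_N * 'rV[R]_N) := doubling c p.1 p.2.
have hs : has_sup (range Phi).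
  split; first by exists (Phi (0, 0)), (0, 0).
  by exists M => _ [[x y] _ <-]; exact: doubling_le (ltW c0).
pose s := sup (range Phi).
have Phi_s p : Phi p <= s by apply: sup_upper_bound => //; exists p.
have s_ge : - M <= s := le_trans (doubling00_ge c) (Phi_s (0, 0)).
pose B := (2 * M + 1) / c + 1.
pose K : set ('rV[R]_N * 'rV[R]_N) := box 0 1 `*` box (- B) (1 + B).
have appr e : 0 < e -> exists2 p, K p & s - e < Phi p.
  move=> e0; have e'0 : 0 < Num.min e 1 by rewrite lt_min e0 ltr01.
  have [_ [[x y] _ <-] hxy] := sup_adherent e'0 hs.
  have [z xz] := exists_intvec_box01 x.
  exists (x + intvec R z, y + intvec R z); last first.
    rewrite /Phi /= doubling_translate; apply: le_lt_trans hxy.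
    by rewrite lerD2l lerN2 ge_min lexx.
  split => // i /=; have := xz i; rewrite /= !in_itv /= !mxE => /andP[x0 x1].
  have dxy : dotp (x - y) (x - y) <= (2 * M + 1) / c.
    rewrite ler_pdivlMr // mulrC; have := doubling_penalty_le c x y.
    have : s - 1 < doubling c x y.
      by apply: le_lt_trans hxy; rewrite lerD2l lerN2 ge_min lexx orbT.
    rewrite -/M; lra.
  have := abs_le_of_sqr_le (le_trans (coord_sqr_le_dotp (x - y) i) dxy).
  rewrite ler_norml !mxE -/B; lra.
have cK : compact K by apply: compact_setX; exact: box_compact.
have [[x y] _ hp] := compact_usc_attains cK (@doubling_usc c) appr.
by exists x, y => x' y'; exact: le_trans (Phi_s (x', y')) hp.
Qed.

Lemma doubling_small_penalty e : 0 < e -> exists c x y,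
  [/\ 1 <= c, doubling_argmax c x y & c * dotp (x - y) (x - y) <= e].
Proof.
move=> e0; have two_gt0 : 0 < 2 :> R by [].
have max_ex k : exists p : 'rV[R]_N * 'rV[R]_N, doubling_argmax (2 ^+ k) p.1 p.2.
  have [x [y xy]] := doubling_argmax_exists (exprn_gt0 k two_gt0).
  by exists (x, y).
have [g gmax] := choice max_ex.
pose m k := doubling (2 ^+ k) (g k).1 (g k).2.
have mM k : `|m k| <= Mu + Mv.
  rewrite ler_norml /m doubling_le ?exprn_ge0 // andbT.
  exact: le_trans (doubling00_ge _) (gmax k 0 0).
have [k mk] := bounded_seq_small_decrement mM (divr_gt0 e0 two_gt0).
exists (2 ^+ k.+1), (g k.+1).1, (g k.+1).2; split => //.
  by rewrite exprn_ege1 // ler1n.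
have := doubling_gap (g k.+1).1 (g k.+1).2 (gmax k); rewrite -exprS -/(m k) -/(m k.+1).
by rewrite exprS -mulrA; lra.
Qed.

End Doubling.

Lemma visc_doubling_argmax (R : realType) (N : nat) (V : 'rV[R]_N -> 'rV[R]_N)
    (P : 'rV[R]_N) (a b c : R) (u v : 'rV[R]_N -> R) (x y : 'rV[R]_N) :
  visc_sub V P b u -> visc_super V P a v -> doubling_argmax u v c x y ->
  a - b <= dotp ((2 * c) *: (x - y) + P) (V y - V x).
Proof.
move=> [_ usub] [_ vsuper] xy.
(* u - paraboloid y (v y) c is maximal at x, v - paraboloid x (u x) (- c) minimal at y *)
have hb : Ham V x ((2 * c) *: (x - y) + P) <= b.
  rewrite -(grad_paraboloid y (v y) c x); apply: usub; first exact: paraboloid_C1.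
  apply: (@nearW _ _ _ (@nbhs_pfilter _ x)) => x'; have := xy x' y.
  by rewrite /doubling /paraboloid; lra.
have ha : a <= Ham V y ((2 * c) *: (x - y) + P).
  have -> : (2 * c) *: (x - y) = grad (paraboloid x (u x) (- c)) y.
    by rewrite grad_paraboloid mulrN scaleNr -scalerN opprB.
  apply: vsuper; first exact: paraboloid_C1.
  apply: (@nearW _ _ _ (@nbhs_pfilter _ y)) => y'; have := xy x y'.
  by rewrite /doubling /paraboloid -(dotpNN (x - y')) -(dotpNN (x - y)) !opprB; lra.
by have := Ham_subx V y x ((2 * c) *: (x - y) + P); lra.
Qed.

Lemma penalty_estimate (R : realType) (N : nat) (L lam c : R) (P d w : 'rV[R]_N) :
  0 < lam -> 1 <= c -> dotp w w <= L ^+ 2 * dotp d d ->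
  dotp ((2 * c) *: d + P) w <=
    (1 + L ^+ 2) * (c * dotp d d) + (lam * dotp P P + L ^+ 2 * (c * dotp d d) / lam) / 2.
Proof.
move=> lam0 c1 wd; rewrite dotpDl dotpZl.
have dd0 := dotp_ge0 d; have L0 := sqr_ge0 L.
have dw : c * (2 * dotp d w) <= c * (dotp d d + dotp w w).
  by rewrite ler_wpM2l ?dotp_le_mean //; lra.
have cw : c * dotp w w <= L ^+ 2 * (c * dotp d d).
  by rewrite mulrCA ler_wpM2l //; lra.
have Pw := dotp_young P w lam0.
have wl : dotp w w / lam <= L ^+ 2 * (c * dotp d d) / lam.
  rewrite ler_pM2r ?invr_gt0 //; apply: le_trans wd _.
  by rewrite ler_wpM2l // ler_peMl.
have dd : dotp d d <= c * dotp d d by rewrite ler_peMl.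
lra.
Qed.

Lemma comparison (R : realType) (N : nat) (V : 'rV[R]_N -> 'rV[R]_N) (P : 'rV[R]_N)
    (a b : R) (u v : 'rV[R]_N -> R) :
  lipschitz_vf V -> visc_sub V P b u -> bdd_fun u -> Zperiodic u ->
  visc_super V P a v -> bdd_fun v -> Zperiodic v -> a <= b.
Proof.
move=> [L VL] usub [Mu uMu] uper vsuper [Mv vMv] vper.
have L0 := sqr_ge0 L.
rewrite -subr_le0; apply: (le_of_forall_leDM (C := dotp P P / 2)).
  by rewrite divr_ge0 ?dotp_ge0.
move=> lam lam0; rewrite add0r mulrC.
apply: (le_of_forall_leDM (C := 1 + L ^+ 2 + L ^+ 2 / (2 * lam))).
  have : 0 <= L ^+ 2 / (2 * lam) by rewrite divr_ge0 // mulr_ge0 // ltW.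
  lra.
move=> e e0.
have [c [x [y [c1 xy cxy]]]] := doubling_small_penalty uMu vMv usub.1 vsuper.1 uper vper e0.
have VLxy : dotp (V y - V x) (V y - V x) <= L ^+ 2 * dotp (x - y) (x - y).
  by rewrite -(dotpNN (x - y)) opprB; exact: dotp_le_of_enorm_le.
have := penalty_estimate P lam0 c1 VLxy.
have := visc_doubling_argmax usub vsuper xy.
have e1 : (1 + L ^+ 2) * (c * dotp (x - y) (x - y)) <= (1 + L ^+ 2) * e.
  by rewrite ler_wpM2l //; lra.
have e2 : L ^+ 2 * (c * dotp (x - y) (x - y)) / lam <= L ^+ 2 * e / lam.
  by rewrite ler_pM2r ?invr_gt0 // ler_wpM2l.
have -> : (1 + L ^+ 2 + L ^+ 2 / (2 * lam)) * e = (1 + L ^+ 2) * e + L ^+ 2 * e / lam / 2.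
  by field; rewrite gt_eqF.
lra.
Qed.

Theorem lemma6p10 (R : realType) (N : nat) (V : 'rV[R]_N -> 'rV[R]_N)
  (hVper : Zperiodic V) (hVlip : lipschitz_vf V)
  (P : 'rV[R]_N) (a : R) :
  (exists u : 'rV[R]_N -> R, visc_sub V P a u /\ bdd_fun u /\ Zperiodic u) ->
  (exists v : 'rV[R]_N -> R, visc_super V P a v /\ bdd_fun v /\ Zperiodic v) ->
  Hbar V P = a%:E.
Proof.
move=> [u [usub [ubdd uper]]] [v [vsuper [vbdd vper]]].
apply/eqP; rewrite eq_le; apply/andP; split.
  by apply: ereal_inf_lbound; exists a => //; exists u.
apply/ereal_infP => _ [b [w [wsub [wbdd wper]]] <-].
by rewrite lee_fin (comparison hVlip wsub wbdd wper vsuper vbdd vper).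
Qed.
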